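(* Let $x$ and $y$ be two distinct vertices of a graph $G$. Then there exists an $x$–$y$ grain line in $G$ if and only if $G$ contains infinitely many pairwise edge-disjoint $x$–$y$ paths.
   Context: Graphs are simple and may be infinite; $\mathbb{N}=\{0,1,2,\dots\}$. An $x$–$y$ path $P$ induces a linear order $\le_P$ on $V(P)$ (the order of traversal from $x$ to $y$). For distinct vertices $x,y$ of $G$, an $x$–$y$ grain line in $G$ is a pair $(L,\mathcal P)$ where $L\subseteq V(G)$ is a countable set with a linear order $\le_L$ having least element $x$ and greatest element $y$, and $\mathcal P=(P_n)_{n\in\mathbb{N}}$ is a sequence of pairwise edge-disjoint $x$–$y$ paths in $G$, such that: (GL1) $L$ is exactly the set of vertices $v$ for which $\{n\in\mathbb{N}: v\in V(P_n)\}$ is a non-empty final segment $\{n: n\ge m\}$ of $\mathbb{N}$; (GL2) if a vertex of $P_n$ is not in $L$, then it is not a vertex of any $P_m$ with $m\neq n$; (GL3) for every $n\in\mathbb{N}$, the orders $\le_{P_n}$ and $\le_L$ induce the same linear order on $L_{<n}:=L\cap\bigcup_{k<n}V(P_k)$. *)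

From Stdlib Require Import Arith List.
Import ListNotations.

Record Graph := {
  vtx : Type;
  adj : vtx -> vtx -> Prop;
  adj_sym : forall u v, adj u v -> adj v u;
  adj_irrefl : forall v, ~ adj v v
}.

Section Defs.
Variable G : Graph.

Definition is_path (x y : vtx G) (P : list (vtx G)) : Prop :=
  NoDup P /\
  nth_error P 0 = Some x /\
  nth_error P (length P - 1) = Some y /\
  (forall i u v, nth_error P i = Some u -> nth_error P (S i) = Some v ->
     adj G u v).

Definition path_edge (P : list (vtx G)) (u v : vtx G) : Prop :=
  exists i, nth_error P i = Some u /\ nth_error P (S i) = Some v.

Definition edge_disjoint (P Q : list (vtx G)) : Prop :=
  forall u v, path_edge P u v -> ~ (path_edge Q u v \/ path_edge Q v u).

Definition path_le (P : list (vtx G)) (u w : vtx G) : Prop :=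
  exists i j, i <= j /\ nth_error P i = Some u /\ nth_error P j = Some w.

Definition countable_set (L : vtx G -> Prop) : Prop :=
  exists f : vtx G -> nat, forall u w, L u -> L w -> f u = f w -> u = w.

Definition linear_order_on (L : vtx G -> Prop) (leL : vtx G -> vtx G -> Prop)
  : Prop :=
  (forall u, L u -> leL u u) /\
  (forall u w, L u -> L w -> leL u w -> leL w u -> u = w) /\
  (forall u v w, L u -> L v -> L w -> leL u v -> leL v w -> leL u w) /\
  (forall u w, L u -> L w -> leL u w \/ leL w u).

Definition grain_line (x y : vtx G) (L : vtx G -> Prop)
  (leL : vtx G -> vtx G -> Prop) (P : nat -> list (vtx G)) : Prop :=
  countable_set L /\
  linear_order_on L leL /\
  L x /\ (forall v, L v -> leL x v) /\
  L y /\ (forall v, L v -> leL v y) /\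
  (forall n, is_path x y (P n)) /\
  (forall n m, n <> m -> edge_disjoint (P n) (P m)) /\
  (forall v, L v <-> exists m, forall n, In v (P n) <-> m <= n) /\
  (forall n v, In v (P n) -> ~ L v -> forall m, m <> n -> ~ In v (P m)) /\
  (forall n u w,
     L u -> (exists k, k < n /\ In u (P k)) ->
     L w -> (exists k, k < n /\ In w (P k)) ->
     (path_le (P n) u w <-> leL u w)).

Definition inf_edge_disjoint_paths (x y : vtx G) : Prop :=
  exists S : list (vtx G) -> Prop,
    (forall P, S P -> is_path x y P) /\
    (forall P Q, S P -> S Q -> P <> Q -> edge_disjoint P Q) /\
    ~ (exists l : list (list (vtx G)), forall P, S P -> In P l).

End Defs.

From Stdlib Require Import Arith List Lia Classical ClassicalEpsilon Cantor FinFun.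
Import ListNotations.

(* If x <> y, every x–y path uses an edge at x, so pairwise edge-disjoint x–y
   paths are pairwise distinct: the paths of a grain line are infinitely many.  A diagonal,
   Ramsey-type argument yields a subsequence (P_n) such that, for every f,
   whether a vertex of P_f lies on P_j, and how two vertices of P_f are ordered
   on P_j, does not depend on j > f.  Take L to be the vertices lying on all P_n
   from some index on, ordered by their eventual order on the P_n.  GL2 holds
   because a vertex whose first path is P_f and which lies on one later path
   lies on all later paths. *)

Lemma injective_seq_of_infinite {A : Type} (C : A -> Prop) :
  ~ (exists l : list A, forall a, C a -> In a l) ->
  exists Q : nat -> A, (forall n, C (Q n)) /\ (forall n m, Q n = Q m -> n = m).
Proof.
  intros Hinf.
  assert (Hfresh : forall l : list A, exists a, C a /\ ~ In a l).
  { intros l. apply NNPP. intros Hno. apply Hinf. exists l. intros a Ha.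
    apply NNPP. intros Hal. apply Hno. eauto. }
  destruct (Hfresh []) as [a0 _].
  set (fresh l := epsilon (inhabits a0) (fun a => C a /\ ~ In a l)).
  assert (Hfresh_spec : forall l, C (fresh l) /\ ~ In (fresh l) l)
    by (intros l; apply epsilon_spec, Hfresh).
  set (prefix := fix prefix n :=
         match n with 0 => [] | S n => fresh (prefix n) :: prefix n end).
  assert (Hprefix : forall m n, m < n -> In (fresh (prefix m)) (prefix n)).
  { induction 1; [left | right]; auto. }
  exists (fun n => fresh (prefix n)). split; [intros n; apply Hfresh_spec |].
  intros n m E.
  destruct (Nat.lt_trichotomy n m) as [h | [h | h]]; [exfalso | exact h | exfalso].
  - apply (proj2 (Hfresh_spec (prefix m))). rewrite <- E. now apply Hprefix.
  - apply (proj2 (Hfresh_spec (prefix n))). rewrite E. now apply Hprefix.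
Qed.

Section Paths.
Variable G : Graph.
Notation V := (vtx G).

Lemma path_edge_first x y P : x <> y -> is_path G x y P -> exists v, path_edge G P x v.
Proof.
  intros Hxy (_ & H0 & Hlast & _).
  destruct P as [| x' [| v P]]; simpl in *; try discriminate.
  - congruence.
  - exists v, 0. simpl. auto.
Qed.

Lemma is_path_In_first x y P : is_path G x y P -> In x P.
Proof. intros (_ & H0 & _). exact (nth_error_In _ _ H0). Qed.

Lemma is_path_In_last x y P : is_path G x y P -> In y P.
Proof. intros (_ & _ & Hlast & _). exact (nth_error_In _ _ Hlast). Qed.

Lemma path_le_refl (P : list V) u : In u P -> path_le G P u u.
Proof. intros [i Hi]%In_nth_error. exists i, i. auto. Qed.

Lemma path_le_total (P : list V) u w : In u P -> In w P -> path_le G P u w \/ path_le G P w u.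
Proof.
  intros [i Hi]%In_nth_error [j Hj]%In_nth_error.
  destruct (Nat.le_ge_cases i j); [left; exists i, j | right; exists j, i]; auto.
Qed.

Lemma NoDup_nth_error_inj (P : list V) i j u : NoDup P ->
  nth_error P i = Some u -> nth_error P j = Some u -> i = j.
Proof.
  intros Hnd Hi Hj. apply (proj1 (NoDup_nth_error P) Hnd); [| congruence].
  apply nth_error_Some. congruence.
Qed.

Lemma path_le_antisym (P : list V) u w : NoDup P ->
  path_le G P u w -> path_le G P w u -> u = w.
Proof.
  intros Hnd (i & j & Hij & Hi & Hj) (j' & i' & Hji & Hj' & Hi').
  pose proof (NoDup_nth_error_inj P _ _ _ Hnd Hi Hi').
  pose proof (NoDup_nth_error_inj P _ _ _ Hnd Hj Hj').
  subst. replace j' with i' in * by lia. congruence.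
Qed.

Lemma path_le_trans (P : list V) u v w : NoDup P ->
  path_le G P u v -> path_le G P v w -> path_le G P u w.
Proof.
  intros Hnd (i & j & Hij & Hi & Hj) (j' & k & Hjk & Hj' & Hk).
  pose proof (NoDup_nth_error_inj P _ _ _ Hnd Hj Hj'). subst.
  exists i, k. split; [lia | auto].
Qed.

Lemma path_le_first x y P v : is_path G x y P -> In v P -> path_le G P x v.
Proof. intros (_ & H0 & _) [j Hj]%In_nth_error. exists 0, j. split; [lia | auto]. Qed.

Lemma path_le_last x y P v : is_path G x y P -> In v P -> path_le G P v y.
Proof.
  intros (_ & _ & Hlast & _) [j Hj]%In_nth_error.
  assert (j < length P) by (apply nth_error_Some; congruence).
  exists j, (length P - 1). split; [lia | auto].
Qed.

Lemma countable_set_of_covered (P : nat -> list V) (L : V -> Prop) :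
  (forall v, L v -> exists n, In v (P n)) -> countable_set G L.
Proof.
  intros Hcov.
  set (pos v := epsilon (inhabits (0, 0))
                  (fun ni => nth_error (P (fst ni)) (snd ni) = Some v)).
  assert (Hpos : forall v, L v -> nth_error (P (fst (pos v))) (snd (pos v)) = Some v).
  { intros v Hv. apply epsilon_spec.
    destruct (Hcov v Hv) as [n [i Hi]%In_nth_error]. now exists (n, i). }
  exists (fun v => to_nat (pos v)). intros u w Hu Hw E.
  apply to_nat_inj in E. pose proof (Hpos u Hu) as Pu. pose proof (Hpos w Hw) as Pw.
  rewrite E in Pu. congruence.
Qed.

Section Families.
Variables x y : V.
Hypothesis Hxy : x <> y.

Lemma inf_edge_disjoint_paths_of_seq (P : nat -> list V) :
  (forall n, is_path G x y (P n)) ->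
  (forall n m, n <> m -> edge_disjoint G (P n) (P m)) ->
  inf_edge_disjoint_paths G x y.
Proof.
  intros Hpath Hdisj.
  assert (Hinj : forall n m, P n = P m -> n = m).
  { intros n m E. apply NNPP. intros Hnm.
    destruct (path_edge_first x y (P n) Hxy (Hpath n)) as [v Hv].
    apply (Hdisj n m Hnm x v Hv). left. now rewrite <- E. }
  exists (fun Q => exists n, P n = Q). split; [| split].
  - intros Q [n <-]. apply Hpath.
  - intros Q R [n <-] [m <-] Hne. apply Hdisj. intros ->. now apply Hne.
  - intros [l Hl].
    assert (HN : NoDup (map P (seq 0 (S (length l))))).
    { apply Injective_map_NoDup; [exact Hinj | apply seq_NoDup]. }
    assert (Hincl : incl (map P (seq 0 (S (length l)))) l).
    { intros Q (n & <- & _)%in_map_iff. apply Hl. eauto. }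
    pose proof (NoDup_incl_length HN Hincl) as Hlen.
    rewrite length_map, length_seq in Hlen. lia.
Qed.

Lemma seq_of_inf_edge_disjoint_paths :
  inf_edge_disjoint_paths G x y ->
  exists Q : nat -> list V, (forall n, is_path G x y (Q n)) /\
    (forall n m, n <> m -> edge_disjoint G (Q n) (Q m)).
Proof.
  intros (C & Hpath & Hdisj & Hinf).
  destruct (injective_seq_of_infinite C Hinf) as (Q & HC & Hinj).
  exists Q. split; [auto |].
  intros n m Hnm. apply Hdisj; [apply HC | apply HC |].
  intros E. exact (Hnm (Hinj n m E)).
Qed.

End Families.
End Paths.

Definition infinite_nat (I : nat -> Prop) : Prop := forall N, exists n, N <= n /\ I n.

Definition constant_on (p : nat -> Prop) (J : nat -> Prop) : Prop :=
  forall j j', J j -> J j' -> (p j <-> p j').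

Lemma infinite_nat_above I k : infinite_nat I -> infinite_nat (fun n => I n /\ k < n).
Proof.
  intros Hinf N. destruct (Hinf (max N (S k))) as (n & Hn & HIn).
  exists n. split; [lia | split; [exact HIn | lia]].
Qed.

Lemma infinite_constant_subset I p : infinite_nat I ->
  exists J, (forall n, J n -> I n) /\ infinite_nat J /\ constant_on p J.
Proof.
  intros Hinf. destruct (classic (infinite_nat (fun n => I n /\ p n))) as [Hp | Hp].
  - exists (fun n => I n /\ p n). split; [| split]; [tauto | exact Hp |].
    intros j j' [_ Hj] [_ Hj']. tauto.
  - apply not_all_ex_not in Hp as [N HN].
    exists (fun n => I n /\ N < n).
    split; [| split]; [tauto | exact (infinite_nat_above I N Hinf) |].
    intros j j' [Ij Nj] [Ij' Nj'].
    split; intros Hpj; exfalso; apply HN; [exists j | exists j']; repeat split; auto; lia.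
Qed.

Lemma infinite_constant_subset_list I (ps : list (nat -> Prop)) : infinite_nat I ->
  exists J, (forall n, J n -> I n) /\ infinite_nat J /\ forall p, In p ps -> constant_on p J.
Proof.
  revert I. induction ps as [| p ps IH]; intros I Hinf.
  - exists I. split; [| split]; [auto | auto | intros p []].
  - destruct (IH I Hinf) as (J1 & HJ1I & HJ1inf & HJ1const).
    destruct (infinite_constant_subset J1 p HJ1inf) as (J2 & HJ21 & HJ2inf & HJ2const).
    exists J2. split; [| split]; [auto | auto |].
    intros q [<- | Hq]; [auto |].
    intros j j' Hj Hj'. apply HJ1const; auto.
Qed.

Section Diagonal.
Variable F : nat -> list (nat -> Prop).

Definition refines (I : nat -> Prop) (k : nat) (J : nat -> Prop) : Prop :=
  I k /\ (forall n, J n -> I n /\ k < n) /\ infinite_nat J /\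
  forall p, In p (F k) -> constant_on p J.

Lemma refines_exists I : infinite_nat I -> exists kJ, refines I (fst kJ) (snd kJ).
Proof.
  intros Hinf. destruct (Hinf 0) as (k & _ & Ik).
  destruct (infinite_constant_subset_list _ (F k) (infinite_nat_above I k Hinf))
    as (J & HJ & HJinf & HJconst).
  exists (k, J). split; [| split; [| split]]; auto.
Qed.

Definition refine_step (I : nat -> Prop) : nat * (nat -> Prop) :=
  epsilon (inhabits (0, I)) (fun kJ => refines I (fst kJ) (snd kJ)).

Lemma refine_step_spec I : infinite_nat I ->
  refines I (fst (refine_step I)) (snd (refine_step I)).
Proof.
  intros Hinf.
  exact (epsilon_spec _ (fun kJ => refines I (fst kJ) (snd kJ)) (refines_exists I Hinf)).
Qed.

Fixpoint diagonal_domain (n : nat) : nat -> Prop :=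
  match n with 0 => fun _ => True | S n => snd (refine_step (diagonal_domain n)) end.

Definition diagonal_pick (n : nat) : nat := fst (refine_step (diagonal_domain n)).

Lemma diagonal_domain_refines n :
  refines (diagonal_domain n) (diagonal_pick n) (diagonal_domain (S n)).
Proof.
  assert (Hinf : infinite_nat (diagonal_domain n)).
  { induction n as [| n IH]; [intros N; now exists N |].
    now destruct (refine_step_spec _ IH) as (_ & _ & ? & _). }
  exact (refine_step_spec _ Hinf).
Qed.

Lemma diagonal_domain_antitone n m k : n <= m -> diagonal_domain m k -> diagonal_domain n k.
Proof.
  induction 1 as [| m _ IH]; [auto |].
  intros Hk. apply IH, (proj1 (proj2 (diagonal_domain_refines m)) k Hk).
Qed.

Lemma diagonal_pick_in_domain f j : f < j -> diagonal_domain (S f) (diagonal_pick j).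
Proof.
  intros Hfj. apply (diagonal_domain_antitone _ j); [exact Hfj |].
  exact (proj1 (diagonal_domain_refines j)).
Qed.

Lemma diagonal_pick_increasing f j : f < j -> diagonal_pick f < diagonal_pick j.
Proof.
  intros Hfj. destruct (diagonal_domain_refines f) as (_ & Hdomain & _).
  exact (proj2 (Hdomain _ (diagonal_pick_in_domain f j Hfj))).
Qed.

Lemma diagonal_pick_stabilizes f p : In p (F (diagonal_pick f)) ->
  forall j j', f < j -> f < j' -> (p (diagonal_pick j) <-> p (diagonal_pick j')).
Proof.
  intros Hp j j' Hj Hj'. destruct (diagonal_domain_refines f) as (_ & _ & _ & Hconst).
  apply Hconst; [exact Hp | apply diagonal_pick_in_domain ..]; assumption.
Qed.

End Diagonal.

Lemma diagonal_stabilization (F : nat -> list (nat -> Prop)) :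
  exists a : nat -> nat, (forall n m, n < m -> a n < a m) /\
    forall f p, In p (F (a f)) -> forall j j', f < j -> f < j' -> (p (a j) <-> p (a j')).
Proof.
  exists (diagonal_pick F).
  split; [apply diagonal_pick_increasing | apply diagonal_pick_stabilizes].
Qed.

Section GrainLine.
Variable G : Graph.
Notation V := (vtx G).
Variables x y : V.
Variable P : nat -> list V.
Hypothesis P_path : forall n, is_path G x y (P n).
Hypothesis P_disjoint : forall n m, n <> m -> edge_disjoint G (P n) (P m).
Hypothesis P_In_stable : forall f v, In v (P f) ->
  forall j j', f < j -> f < j' -> (In v (P j) <-> In v (P j')).
Hypothesis P_le_stable : forall f u w, In u (P f) -> In w (P f) ->
  forall j j', f < j -> f < j' -> (path_le G (P j) u w <-> path_le G (P j') u w).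

Definition limit_vertex (v : V) : Prop := exists m, forall n, In v (P n) <-> m <= n.

Definition limit_le (u w : V) : Prop := exists N, forall n, N <= n -> path_le G (P n) u w.

Lemma limit_le_stable f u w j : In u (P f) -> In w (P f) -> f < j ->
  (limit_le u w <-> path_le G (P j) u w).
Proof.
  intros Hu Hw Hfj. split.
  - intros [N HN]. apply (P_le_stable f u w Hu Hw j (S (max N f))); [lia | lia |].
    apply HN. lia.
  - intros Hj. exists (S f). intros n Hn.
    apply (P_le_stable f u w Hu Hw j n); [lia | lia | exact Hj].
Qed.

Lemma limit_vertex_common u w : limit_vertex u -> limit_vertex w ->
  exists f, forall n, f <= n -> In u (P n) /\ In w (P n).
Proof.
  intros [mu Hu] [mw Hw]. exists (max mu mw). intros n Hn.
  split; [apply Hu | apply Hw]; lia.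
Qed.

Lemma limit_le_linear : linear_order_on G limit_vertex limit_le.
Proof.
  split; [| split; [| split]].
  - intros u [m Hm]. exists m. intros n Hn. apply path_le_refl, Hm, Hn.
  - intros u w _ _ [N1 H1] [N2 H2].
    apply (path_le_antisym G (P (max N1 N2))); [apply P_path | apply H1 | apply H2]; lia.
  - intros u v w _ _ _ [N1 H1] [N2 H2]. exists (max N1 N2). intros n Hn.
    apply (path_le_trans G (P n) u v w); [apply P_path | apply H1 | apply H2]; lia.
  - intros u w Hu Hw. destruct (limit_vertex_common u w Hu Hw) as [f Hf].
    destruct (Hf f (le_n f)) as [Huf Hwf].
    destruct (Hf (S f) (le_S _ _ (le_n f))) as [Hu' Hw'].
    rewrite (limit_le_stable f u w (S f)), (limit_le_stable f w u (S f)) by auto.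
    now apply path_le_total.
Qed.

Lemma first_occurrence v n : In v (P n) ->
  exists f, In v (P f) /\ forall k, k < f -> ~ In v (P k).
Proof.
  induction n as [n IH] using lt_wf_ind. intros Hn.
  destruct (classic (exists k, k < n /\ In v (P k))) as [(k & Hk & Ik) | Hno].
  - exact (IH k Hk Ik).
  - exists n. split; [exact Hn |]. intros k Hk Ik. apply Hno. eauto.
Qed.

Lemma limit_vertex_or_unique v n : In v (P n) ->
  limit_vertex v \/ forall m, In v (P m) -> m = n.
Proof.
  intros Hn. destruct (first_occurrence v n Hn) as (f & Hf & Hbefore).
  assert (Hafter : forall j, f < j -> (In v (P j) <-> In v (P (S f))))
    by (intros j Hj; apply (P_In_stable f); [exact Hf | lia | lia]).
  destruct (classic (In v (P (S f)))) as [HS | HS].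
  - left. exists f. intros k. split.
    + intros Hk. apply Nat.nlt_ge. intros Hkf. exact (Hbefore k Hkf Hk).
    + intros Hfk. destruct (Nat.eq_dec k f) as [-> | Hkf]; [exact Hf |].
      apply Hafter; [lia | exact HS].
  - right. assert (Honly : forall m, In v (P m) -> m = f).
    { intros m Hm. destruct (Nat.lt_trichotomy m f) as [h | [h | h]]; [| exact h |].
      - now destruct (Hbefore m h).
      - now apply Hafter in Hm. }
    intros m Hm. now rewrite (Honly m Hm), (Honly n Hn).
Qed.

Lemma grain_line_limit : grain_line G x y limit_vertex limit_le P.
Proof.
  assert (Hx : limit_vertex x).
  { exists 0. split; [lia | intros _; exact (is_path_In_first G x y _ (P_path n))]. }
  assert (Hy : limit_vertex y).
  { exists 0. split; [lia | intros _; exact (is_path_In_last G x y _ (P_path n))]. }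
  split; [| split; [exact limit_le_linear |]].
  { apply (countable_set_of_covered G P). intros v [m Hm]. exists m. apply Hm, le_n. }
  split; [exact Hx | split; [| split; [exact Hy | split]]].
  { intros v [m Hm]. exists m. intros n Hn.
    apply (path_le_first G x y); [apply P_path | apply Hm, Hn]. }
  { intros v [m Hm]. exists m. intros n Hn.
    apply (path_le_last G x y); [apply P_path | apply Hm, Hn]. }
  split; [exact P_path | split; [exact P_disjoint | split; [reflexivity | split]]].
  - intros n v Hv HL m Hmn Hm.
    destruct (limit_vertex_or_unique v n Hv) as [HLv | Hunique]; [exact (HL HLv) |].
    exact (Hmn (Hunique m Hm)).
  - intros n u w [mu Hu] (k1 & Hk1 & Iu) [mw Hw] (k2 & Hk2 & Iw).
    set (f := max k1 k2).
    assert (Huf : In u (P f)) by (apply Hu; apply Hu in Iu; lia).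
    assert (Hwf : In w (P f)) by (apply Hw; apply Hw in Iw; lia).
    symmetry. apply (limit_le_stable f); [exact Huf | exact Hwf | lia].
Qed.

End GrainLine.

Lemma stable_subsequence (G : Graph) (Q : nat -> list (vtx G)) :
  exists a : nat -> nat, (forall n m, n < m -> a n < a m) /\
    (forall f v, In v (Q (a f)) ->
       forall j j', f < j -> f < j' -> (In v (Q (a j)) <-> In v (Q (a j')))) /\
    (forall f u w, In u (Q (a f)) -> In w (Q (a f)) ->
       forall j j', f < j -> f < j' ->
       (path_le G (Q (a j)) u w <-> path_le G (Q (a j')) u w)).
Proof.
  set (tests k := map (fun v n => In v (Q n)) (Q k) ++
                  map (fun uw n => path_le G (Q n) (fst uw) (snd uw)) (list_prod (Q k) (Q k))).
  destruct (diagonal_stabilization tests) as (a & Hinc & Hstab).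
  exists a. split; [exact Hinc | split].
  - intros f v Hv. apply (Hstab f (fun n => In v (Q n))).
    apply in_or_app. left. apply in_map_iff. eauto.
  - intros f u w Hu Hw. apply (Hstab f (fun n => path_le G (Q n) u w)).
    apply in_or_app. right. apply in_map_iff.
    exists (u, w). split; [reflexivity | now apply in_prod].
Qed.

Theorem theorem5p4 (G : Graph) (x y : vtx G) (Hxy : x <> y) :
  (exists (L : vtx G -> Prop) (leL : vtx G -> vtx G -> Prop)
          (P : nat -> list (vtx G)), grain_line G x y L leL P)
  <-> inf_edge_disjoint_paths G x y.
Proof.
  split.
  - intros (L & leL & P & _ & _ & _ & _ & _ & _ & Hpath & Hdisj & _).
    exact (inf_edge_disjoint_paths_of_seq G x y Hxy P Hpath Hdisj).
  - intros Hinf.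
    destruct (seq_of_inf_edge_disjoint_paths G x y Hinf) as (Q & Hpath & Hdisj).
    destruct (stable_subsequence G Q) as (a & Hinc & HIn & Hle).
    set (P n := Q (a n)).
    exists (limit_vertex G P), (limit_le G P), P.
    apply grain_line_limit; [intros n; apply Hpath | | exact HIn | exact Hle].
    intros n m Hnm. apply Hdisj.
    apply Nat.lt_gt_cases in Hnm as [h | h]; apply Hinc in h; lia.
Qed.
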